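(* Let $\Omega = [a,b)$ be a bounded interval with periodic boundary conditions, let $k \ge 0$ be an integer, let $T_k$ be the space of real-valued trigonometric polynomials on $\Omega$ of degree at most $k$, let $P$ denote the $L^2(\Omega)$-orthogonal projection onto $T_k$, let $\beta \in \mathbb{R}$ and $\tau > 0$. Let $(v, w, \nu, \omega) \colon I \to T_k^4$ (with $I$ an open time interval) be a continuously differentiable solution of the Fourier Galerkin semidiscretization of the hyperbolic approximation of the nonlinear Schrödinger equation, \[ \begin{aligned} v_t &= -\omega_x - \beta P \bigl( (v^2 + w^2) w \bigr), \\ w_t &= \nu_x + \beta P \bigl( (v^2 + w^2) v \bigr), \\ \tau \nu_t &= w_x - \omega, \\ \tau \omega_t &= -v_x + \nu. \end{aligned} \] Then the mass, momentum, and energy \[ \begin{aligned} \mathcal{M} &= \int_\Omega \left( v^2 + w^2 + \tau \nu^2 + \tau \omega^2 \right) \mathrm{d}x, \\ \mathcal{P} &= \int_\Omega \left( v w_x - v_x w + \tau \nu \omega_x - \tau \nu_x \omega \right) \mathrm{d}x, \\ \mathcal{E} &= \int_\Omega \Bigl( 2 \nu v_x - \nu^2 + 2 \omega w_x - \omega^2 - \frac{\beta}{2} (v^2 + w^2)^2 \Bigr) \mathrm{d}x \end{aligned} \] are constant in time along $(v,w,\nu,\omega)$.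
   Context: This system arises from the hyperbolization $\mathrm{i} q^0_t + q^1_x = -\beta |q^0|^2 q^0$, $\mathrm{i} \tau q^1_t - q^0_x = -q^1$ with $q^0 = v + \mathrm{i} w$, $q^1 = \nu + \mathrm{i}\omega$. The semidiscretization is an ODE on the finite-dimensional space $T_k^4$. *)

From Stdlib Require Import Reals.
From Coquelicot Require Import Coquelicot.
Open Scope R_scope.

Fixpoint sum1 (g : nat -> R) (k : nat) : R :=
  match k with
  | O => 0
  | S n => sum1 g n + g (S n)
  end.

Definition freq (a b : R) (j : nat) : R := 2 * PI * INR j / (b - a).

Definition in_Tk (a b : R) (k : nat) (f : R -> R) : Prop :=
  exists (c0 : R) (ca cb : nat -> R), forall x : R,
    f x = c0 + sum1 (fun j => ca j * cos (freq a b j * x)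
                             + cb j * sin (freq a b j * x)) k.

(* L^2(Omega)-orthogonal projection onto T_k, written in the orthogonal
   Fourier basis 1, cos(freq j x), sin(freq j x), j = 1..k. *)
Definition Pk (a b : R) (k : nat) (f : R -> R) (x : R) : R :=
  / (b - a) * RInt f a b
  + sum1 (fun j =>
        (2 / (b - a) * RInt (fun y => f y * cos (freq a b j * y)) a b)
          * cos (freq a b j * x)
      + (2 / (b - a) * RInt (fun y => f y * sin (freq a b j * y)) a b)
          * sin (freq a b j * x)) k.

Definition in_I (t0 t1 : Rbar) (t : R) : Prop := Rbar_lt t0 t /\ Rbar_lt t t1.

Definition dt (u : R -> R -> R) (t x : R) : R := Derive (fun s => u s x) t.
Definition dx (u : R -> R -> R) (t x : R) : R := Derive (fun y => u t y) x.

Definition mass (a b tau : R) (v w nu om : R -> R -> R) (t : R) : R :=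
  RInt (fun x => v t x ^ 2 + w t x ^ 2 + tau * nu t x ^ 2 + tau * om t x ^ 2) a b.

Definition momentum (a b tau : R) (v w nu om : R -> R -> R) (t : R) : R :=
  RInt (fun x => v t x * dx w t x - dx v t x * w t x
                 + tau * nu t x * dx om t x - tau * dx nu t x * om t x) a b.

Definition energy (a b beta : R) (v w nu om : R -> R -> R) (t : R) : R :=
  RInt (fun x => 2 * nu t x * dx v t x - nu t x ^ 2
                 + 2 * om t x * dx w t x - om t x ^ 2
                 - beta / 2 * (v t x ^ 2 + w t x ^ 2) ^ 2) a b.

(* Each quantity is t |-> int_a^b f(t,x) dx for a density f built from the fields and
   their x-derivatives.  Differentiating under the integral sign and using the
   semidiscrete equations, the rate d_t f is the x-derivative of a periodic flux plus
   terms c * G * (P F - F) with G in T_k: the former integrates to zero by periodicity,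
   the latter by the L^2-orthogonality of the projection P.

   The only delicate point is regularity, since the hypotheses are pointwise in x.
   A function of T_k is recovered from its values at 2k+1 equispaced nodes (discrete
   Fourier coefficients), so each field is a trigonometric polynomial whose coefficients
   are finite combinations of point values; they inherit the C^1 time regularity,
   which yields the joint continuity needed to differentiate under the integral.
   Continuous and discrete orthogonality of the Fourier modes are two instances of one
   computation, for linear functionals that kill the harmonics of order 1..2k. *)

From Stdlib Require Import Reals Lra Lia FunctionalExtensionality.
From Coquelicot Require Import Coquelicot.
Open Scope R_scope.

(* Coquelicot states some equations in its own algebraic structures, where [field]
   does not recognise [R]; restate them in [R] first. *)
Ltac R_field := cbv beta; match goal with |- ?x = ?y => change (@eq R x y) end; field.

Lemma sum1_ext (g h : nat -> R) (n : nat) :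
  (forall j, (1 <= j <= n)%nat -> g j = h j) -> sum1 g n = sum1 h n.
Proof.
  induction n as [|n IH]; intros H; simpl; [reflexivity|].
  rewrite IH, H by (lia || (intros; apply H; lia)). reflexivity.
Qed.

Lemma sum1_plus (g h : nat -> R) (n : nat) :
  sum1 (fun j => g j + h j) n = sum1 g n + sum1 h n.
Proof. induction n; simpl; [lra | rewrite IHn; lra]. Qed.

Lemma sum1_scal (c : R) (g : nat -> R) (n : nat) :
  sum1 (fun j => c * g j) n = c * sum1 g n.
Proof. induction n; simpl; [lra | rewrite IHn; lra]. Qed.

Lemma sum1_mul_r (g : nat -> R) (c : R) (n : nat) :
  sum1 g n * c = sum1 (fun j => g j * c) n.
Proof. induction n; simpl; [lra | rewrite <- IHn; lra]. Qed.

Lemma sum1_const (c : R) (n : nat) : sum1 (fun _ => c) n = INR n * c.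
Proof. induction n; simpl sum1; [simpl; ring | rewrite IHn, S_INR; ring]. Qed.

Lemma sum1_single (g : nat -> R) (n l : nat) :
  (1 <= l <= n)%nat -> (forall j, (1 <= j <= n)%nat -> j <> l -> g j = 0) ->
  sum1 g n = g l.
Proof.
  induction n as [|n IH]; intros Hl H; [lia|]. simpl.
  destruct (Nat.eq_dec l (S n)) as [->|Hne].
  - rewrite (sum1_ext g (fun _ => 0)), sum1_const by (intros j Hj; apply H; lia). ring.
  - rewrite IH, (H (S n)) by (lia || (intros j Hj Hjl; apply H; lia)). ring.
Qed.

Lemma sum1_telescope (g : nat -> R) (n : nat) :
  sum1 (fun m => g m - g (m - 1)%nat) n = g n - g O.
Proof.
  induction n; simpl; [lra|]. rewrite IHn, Nat.sub_0_r. lra.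
Qed.

Lemma freq_add a b j l : freq a b j + freq a b l = freq a b (j + l).
Proof. unfold freq. rewrite plus_INR. unfold Rdiv; ring. Qed.

Lemma freq_sub a b j l : (l <= j)%nat -> freq a b j - freq a b l = freq a b (j - l).
Proof. intros H. unfold freq. rewrite minus_INR by exact H. unfold Rdiv; ring. Qed.

Lemma freq_mul_b a b p : a < b -> freq a b p * b = freq a b p * a + 2 * INR p * PI.
Proof. intros H. unfold freq. field. lra. Qed.

Lemma freq_neq_0 a b p : a < b -> (1 <= p)%nat -> freq a b p <> 0.
Proof.
  intros Hab Hp. unfold freq. assert (0 < INR p) by (apply lt_0_INR; lia).
  pose proof PI_RGT_0. apply Rgt_not_eq, Rlt_gt, Rdiv_lt_0_compat; nra.
Qed.

Lemma is_derive_Rconst (c x : R) : is_derive (fun _ => c) x 0.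
Proof. apply (is_derive_const c). Qed.

Lemma is_derive_Rplus (f g : R -> R) x df dg : is_derive f x df -> is_derive g x dg ->
  is_derive (fun y => f y + g y) x (df + dg).
Proof. intros; apply (is_derive_plus f g); auto. Qed.

Lemma is_derive_Rminus (f g : R -> R) x df dg : is_derive f x df -> is_derive g x dg ->
  is_derive (fun y => f y - g y) x (df - dg).
Proof. intros; apply (is_derive_minus f g); auto. Qed.

Lemma is_derive_Rmult (f g : R -> R) x df dg : is_derive f x df -> is_derive g x dg ->
  is_derive (fun y => f y * g y) x (df * g x + f x * dg).
Proof. intros; apply (is_derive_mult f g); auto. intros; apply Rmult_comm. Qed.

Lemma is_derive_Rmult_r (f : R -> R) c x df : is_derive f x df ->
  is_derive (fun y => f y * c) x (df * c).
Proof.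
  intros H. replace (df * c) with (df * c + f x * 0) by ring.
  apply is_derive_Rmult; auto using is_derive_Rconst.
Qed.

Lemma is_derive_Rsqr (f : R -> R) x df : is_derive f x df ->
  is_derive (fun y => f y ^ 2) x (2 * f x * df).
Proof.
  intros H. replace (2 * f x * df) with (INR 2 * df * f x ^ Nat.pred 2) by (simpl; ring).
  apply (is_derive_pow f 2 x df H).
Qed.

Lemma is_derive_eq (f : R -> R) x d d' : is_derive f x d -> d = d' -> is_derive f x d'.
Proof. intros H <-; exact H. Qed.

Lemma is_derive_sum1 (F : nat -> R -> R) (dF : nat -> R) t n :
  (forall j, (1 <= j <= n)%nat -> is_derive (F j) t (dF j)) ->
  is_derive (fun u => sum1 (fun j => F j u) n) t (sum1 dF n).
Proof.
  induction n as [|n IH]; intros H; simpl.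
  - apply is_derive_Rconst.
  - apply is_derive_Rplus; [apply IH; intros; apply H|apply H]; lia.
Qed.

Definition trig_poly (a b : R) (k : nat) (c0 : R) (ca cb : nat -> R) (x : R) : R :=
  c0 + sum1 (fun j => ca j * cos (freq a b j * x) + cb j * sin (freq a b j * x)) k.

Lemma trig_poly_ext a b k c0 ca cb d0 da db x :
  c0 = d0 -> (forall j, (1 <= j <= k)%nat -> ca j = da j /\ cb j = db j) ->
  trig_poly a b k c0 ca cb x = trig_poly a b k d0 da db x.
Proof.
  intros H0 H. unfold trig_poly. rewrite H0. f_equal.
  apply sum1_ext. intros j Hj. destruct (H j Hj) as [-> ->]. reflexivity.
Qed.

Lemma continuity_const_fun (c : R) : continuity (fun _ => c).
Proof. apply continuity_const; intros ? ?; reflexivity. Qed.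

Lemma continuity_pow_R (f : R -> R) n : continuity f -> continuity (fun x => f x ^ n).
Proof.
  intros H. induction n; simpl; [apply continuity_const_fun | apply continuity_mult; auto].
Qed.

Lemma continuity_sum1 (F : nat -> R -> R) (n : nat) :
  (forall j, continuity (F j)) -> continuity (fun x => sum1 (fun j => F j x) n).
Proof.
  intros H. induction n; simpl; [apply continuity_const_fun | apply continuity_plus; auto].
Qed.

Lemma continuity_cos_mul c : continuity (fun x => cos (c * x)).
Proof.
  intros x. apply continuity_pt_filterlim, (ex_derive_continuous (fun x => cos (c * x))).
  auto_derive; auto.
Qed.

Lemma continuity_sin_mul c : continuity (fun x => sin (c * x)).
Proof.
  intros x. apply continuity_pt_filterlim, (ex_derive_continuous (fun x => sin (c * x))).
  auto_derive; auto.
Qed.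

Lemma continuity_trig_poly a b k c0 ca cb : continuity (trig_poly a b k c0 ca cb).
Proof.
  apply continuity_plus; [apply continuity_const_fun|].
  apply (continuity_sum1 (fun j x => ca j * cos (freq a b j * x) + cb j * sin (freq a b j * x))).
  intros j. apply continuity_plus; apply continuity_mult;
    auto using continuity_const_fun, continuity_cos_mul, continuity_sin_mul.
Qed.

Lemma Pk_trig_poly a b k f : Pk a b k f =
  trig_poly a b k (/ (b - a) * RInt f a b)
    (fun j => 2 / (b - a) * RInt (fun y => f y * cos (freq a b j * y)) a b)
    (fun j => 2 / (b - a) * RInt (fun y => f y * sin (freq a b j * y)) a b).
Proof. reflexivity. Qed.

Lemma continuity_Pk a b k f : continuity (Pk a b k f).
Proof. rewrite Pk_trig_poly. apply continuity_trig_poly. Qed.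

Lemma in_Tk_trig_poly a b k c0 ca cb : in_Tk a b k (trig_poly a b k c0 ca cb).
Proof. exists c0, ca, cb. reflexivity. Qed.

Lemma continuity_in_Tk a b k p : in_Tk a b k p -> continuity p.
Proof.
  intros [c0 [ca [cb Hp]]].
  rewrite (functional_extensionality _ _ Hp). apply continuity_trig_poly.
Qed.

Lemma trig_poly_periodic a b k c0 ca cb :
  a < b -> trig_poly a b k c0 ca cb b = trig_poly a b k c0 ca cb a.
Proof.
  intros H. unfold trig_poly. f_equal. apply sum1_ext. intros j _.
  rewrite freq_mul_b, sin_period, cos_period by exact H. reflexivity.
Qed.
Ltac continuity_tac :=
  repeat match goal with
  | |- continuity (fun _ => _ + _) => apply continuity_plus
  | |- continuity (fun _ => _ - _) => apply continuity_minus
  | |- continuity (fun _ => _ * _) => apply continuity_mult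
  | |- continuity (fun _ => cos (_ * _)) => apply continuity_cos_mul
  | |- continuity (fun _ => sin (_ * _)) => apply continuity_sin_mul
  | |- continuity (fun _ => _ ^ _) => apply continuity_pow_R
  | |- continuity (fun _ => ?c) => apply continuity_const_fun
  | |- continuity _ => first [assumption | apply continuity_trig_poly | apply continuity_Pk]
  end.

Definition linear_on_continuous (A : (R -> R) -> R) : Prop :=
  (forall f g, continuity f -> continuity g -> A (fun x => f x + g x) = A f + A g) /\
  (forall c f, continuity f -> A (fun x => c * f x) = c * A f).

Definition annihilates_harmonics (a b : R) (k : nat) (A : (R -> R) -> R) (m0 : R) : Prop :=
  (forall p, (1 <= p <= 2 * k)%nat ->
     A (fun x => cos (freq a b p * x)) = 0 /\ A (fun x => sin (freq a b p * x)) = 0) /\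
  A (fun _ => 1) = m0.

Section LinearFunctional.

Variables (a b : R) (k : nat) (A : (R -> R) -> R) (m0 : R).
Hypotheses (HA : linear_on_continuous A) (HO : annihilates_harmonics a b k A m0).

Lemma A_ext (f g : R -> R) : (forall x, f x = g x) -> A f = A g.
Proof. intros H. f_equal. apply functional_extensionality. exact H. Qed.

Lemma A_plus f g : continuity f -> continuity g -> A (fun x => f x + g x) = A f + A g.
Proof. apply HA. Qed.

Lemma A_scal c f : continuity f -> A (fun x => c * f x) = c * A f.
Proof. apply HA. Qed.

Lemma A_zero : A (fun _ => 0) = 0.
Proof.
  rewrite (A_ext _ (fun _ => 0 * 1)) by (intros; ring).
  rewrite A_scal by apply continuity_const_fun. ring.
Qed.

Lemma A_sum1 (F : nat -> R -> R) n :
  (forall j, continuity (F j)) ->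
  A (fun x => sum1 (fun j => F j x) n) = sum1 (fun j => A (F j)) n.
Proof.
  intros HF. induction n; simpl; [apply A_zero|].
  rewrite A_plus, IHn; auto. apply (continuity_sum1 F n HF).
Qed.

Lemma A_trig_poly_mul c0 ca cb g : continuity g ->
  A (fun x => trig_poly a b k c0 ca cb x * g x) =
  c0 * A g + sum1 (fun j => ca j * A (fun x => cos (freq a b j * x) * g x)
                          + cb j * A (fun x => sin (freq a b j * x) * g x)) k.
Proof.
  intros Hg.
  rewrite (A_ext _ (fun x => c0 * g x + sum1 (fun j =>
     (fun j x => ca j * (cos (freq a b j * x) * g x)
                 + cb j * (sin (freq a b j * x) * g x)) j x) k)).
  - rewrite A_plus, A_scal, A_sum1 by (intros; continuity_tac;
      apply (continuity_sum1 (fun j x => _)); intros; continuity_tac).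
    f_equal. apply sum1_ext; intros j _. rewrite A_plus, !A_scal; auto; continuity_tac.
  - intros x. unfold trig_poly. rewrite Rmult_plus_distr_r, sum1_mul_r. f_equal.
    apply sum1_ext; intros; ring.
Qed.

Lemma A_cos_freq_sub j l : (1 <= j <= k)%nat -> (1 <= l <= k)%nat ->
  A (fun x => cos ((freq a b j - freq a b l) * x)) = if Nat.eq_dec j l then m0 else 0.
Proof.
  intros Hj Hl. destruct HO as [Hp H1]. destruct (Nat.eq_dec j l) as [->|Hne].
  - rewrite <- H1. apply A_ext. intros x. rewrite Rminus_diag, Rmult_0_l. apply cos_0.
  - destruct (Compare_dec.le_lt_dec l j).
    + rewrite freq_sub by lia. apply Hp; lia.
    + rewrite (A_ext _ (fun x => cos (freq a b (l - j) * x))). apply Hp; lia.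
      intros x. rewrite <- freq_sub, <- cos_neg by lia. f_equal. ring.
Qed.

Lemma A_sin_freq_sub j l : (1 <= j <= k)%nat -> (1 <= l <= k)%nat ->
  A (fun x => sin ((freq a b j - freq a b l) * x)) = 0.
Proof.
  intros Hj Hl. destruct HO as [Hp _]. destruct (Nat.eq_dec j l) as [->|Hne].
  - rewrite <- A_zero. apply A_ext. intros x. rewrite Rminus_diag, Rmult_0_l. apply sin_0.
  - destruct (Compare_dec.le_lt_dec l j).
    + rewrite freq_sub by lia. apply Hp; lia.
    + rewrite (A_ext _ (fun x => -1 * sin (freq a b (l - j) * x))).
      * rewrite A_scal, (proj2 (Hp (l - j)%nat ltac:(lia))) by apply continuity_sin_mul. ring.
      * intros x. rewrite <- freq_sub by lia.
        replace ((freq a b j - freq a b l) * x) with (- ((freq a b l - freq a b j) * x)) by ring.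
        rewrite sin_neg. ring.
Qed.

Lemma A_freq_add j l : (1 <= j <= k)%nat -> (1 <= l <= k)%nat ->
  A (fun x => cos ((freq a b j + freq a b l) * x)) = 0 /\
  A (fun x => sin ((freq a b j + freq a b l) * x)) = 0.
Proof. intros Hj Hl. rewrite freq_add. apply HO; lia. Qed.

Lemma A_cos_cos j l : (1 <= j <= k)%nat -> (1 <= l <= k)%nat ->
  A (fun x => cos (freq a b j * x) * cos (freq a b l * x)) = if Nat.eq_dec j l then m0 / 2 else 0.
Proof.
  intros Hj Hl.
  rewrite (A_ext _ (fun x => / 2 * cos ((freq a b j - freq a b l) * x)
                             + / 2 * cos ((freq a b j + freq a b l) * x))).
  - rewrite A_plus, !A_scal, A_cos_freq_sub, (proj1 (A_freq_add j l Hj Hl))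
      by (auto; continuity_tac).
    destruct (Nat.eq_dec j l); unfold Rdiv; ring.
  - intros x. rewrite Rmult_minus_distr_r, Rmult_plus_distr_r, cos_minus, cos_plus. field.
Qed.

Lemma A_sin_sin j l : (1 <= j <= k)%nat -> (1 <= l <= k)%nat ->
  A (fun x => sin (freq a b j * x) * sin (freq a b l * x)) = if Nat.eq_dec j l then m0 / 2 else 0.
Proof.
  intros Hj Hl.
  rewrite (A_ext _ (fun x => / 2 * cos ((freq a b j - freq a b l) * x)
                             + - / 2 * cos ((freq a b j + freq a b l) * x))).
  - rewrite A_plus, !A_scal, A_cos_freq_sub, (proj1 (A_freq_add j l Hj Hl))
      by (auto; continuity_tac).
    destruct (Nat.eq_dec j l); unfold Rdiv; ring.
  - intros x. rewrite Rmult_minus_distr_r, Rmult_plus_distr_r, cos_minus, cos_plus. field.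
Qed.

Lemma A_sin_cos j l : (1 <= j <= k)%nat -> (1 <= l <= k)%nat ->
  A (fun x => sin (freq a b j * x) * cos (freq a b l * x)) = 0.
Proof.
  intros Hj Hl.
  rewrite (A_ext _ (fun x => / 2 * sin ((freq a b j - freq a b l) * x)
                             + / 2 * sin ((freq a b j + freq a b l) * x))).
  - rewrite A_plus, !A_scal, A_sin_freq_sub, (proj2 (A_freq_add j l Hj Hl))
      by (auto; continuity_tac).
    ring.
  - intros x. rewrite Rmult_minus_distr_r, Rmult_plus_distr_r, sin_minus, sin_plus. field.
Qed.

Lemma A_trig_poly c0 ca cb : A (trig_poly a b k c0 ca cb) = m0 * c0.
Proof.
  rewrite (A_ext _ (fun x => trig_poly a b k c0 ca cb x * 1)) by (intros; ring).
  rewrite A_trig_poly_mul, (proj2 HO) by apply continuity_const_fun.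
  rewrite (sum1_ext _ (fun _ => 0)), sum1_const; [ring|].
  intros j Hj. destruct HO as [Hp _].
  rewrite (A_ext (fun x => cos _ * _) (fun x => cos (freq a b j * x))) by (intros; ring).
  rewrite (A_ext (fun x => sin _ * _) (fun x => sin (freq a b j * x))) by (intros; ring).
  rewrite (proj1 (Hp j ltac:(lia))), (proj2 (Hp j ltac:(lia))). ring.
Qed.

Lemma A_trig_poly_cos c0 ca cb l : (1 <= l <= k)%nat ->
  A (fun x => trig_poly a b k c0 ca cb x * cos (freq a b l * x)) = m0 / 2 * ca l.
Proof.
  intros Hl. rewrite A_trig_poly_mul, (proj1 (proj1 HO l ltac:(lia))) by apply continuity_cos_mul.
  rewrite (sum1_single _ k l Hl).
  - rewrite A_cos_cos, A_sin_cos by auto. destruct (Nat.eq_dec l l); [ring | congruence].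
  - intros j Hj Hjl. rewrite A_cos_cos, A_sin_cos by auto.
    destruct (Nat.eq_dec j l); [congruence | ring].
Qed.

Lemma A_trig_poly_sin c0 ca cb l : (1 <= l <= k)%nat ->
  A (fun x => trig_poly a b k c0 ca cb x * sin (freq a b l * x)) = m0 / 2 * cb l.
Proof.
  intros Hl. rewrite A_trig_poly_mul, (proj2 (proj1 HO l ltac:(lia))) by apply continuity_sin_mul.
  assert (Hcs : forall j, (1 <= j <= k)%nat ->
            A (fun x => cos (freq a b j * x) * sin (freq a b l * x)) = 0).
  { intros j Hj. rewrite <- (A_sin_cos l j) by auto. apply A_ext; intros; ring. }
  rewrite (sum1_single _ k l Hl).
  - rewrite A_sin_sin, Hcs by auto. destruct (Nat.eq_dec l l); [ring | congruence].
  - intros j Hj Hjl. rewrite A_sin_sin, Hcs by auto.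
    destruct (Nat.eq_dec j l); [congruence | ring].
Qed.

End LinearFunctional.

Lemma ex_RInt_continuity (f : R -> R) a b : continuity f -> ex_RInt f a b.
Proof.
  intros H. apply (@ex_RInt_continuous R_CompleteNormedModule).
  intros z _. apply continuity_pt_filterlim, H.
Qed.

Lemma RInt_ext_R (f g : R -> R) a b : (forall x, f x = g x) -> RInt f a b = RInt g a b.
Proof. intros H. f_equal. apply functional_extensionality, H. Qed.

Lemma RInt_plus_R (f g : R -> R) a b : continuity f -> continuity g ->
  RInt (fun x => f x + g x) a b = RInt f a b + RInt g a b.
Proof.
  intros. apply (RInt_plus (V := R_CompleteNormedModule)); apply ex_RInt_continuity; auto.
Qed.

Lemma RInt_minus_R (f g : R -> R) a b : continuity f -> continuity g ->
  RInt (fun x => f x - g x) a b = RInt f a b - RInt g a b.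
Proof.
  intros. apply (RInt_minus (V := R_CompleteNormedModule)); apply ex_RInt_continuity; auto.
Qed.

Lemma RInt_scal_R c (f : R -> R) a b : continuity f -> RInt (fun x => c * f x) a b = c * RInt f a b.
Proof. intros. apply (RInt_scal (V := R_CompleteNormedModule)); apply ex_RInt_continuity; auto. Qed.

Lemma RInt_derive_R (F f : R -> R) a b :
  (forall x, is_derive F x (f x)) -> continuity f -> RInt f a b = F b - F a.
Proof.
  intros HF Hf. apply is_RInt_unique, (is_RInt_derive (V := R_CompleteNormedModule)).
  - intros; apply HF.
  - intros; apply continuity_pt_filterlim, Hf.
Qed.

Lemma RInt_linear a b : linear_on_continuous (fun f => RInt f a b).
Proof. split; intros; [apply RInt_plus_R | apply RInt_scal_R]; auto. Qed.

Lemma RInt_annihilates_harmonics a b k :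
  a < b -> annihilates_harmonics a b k (fun f => RInt f a b) (b - a).
Proof.
  intros Hab. split.
  - intros p Hp. pose proof (freq_neq_0 a b p Hab ltac:(lia)) as Hm.
    split.
    + rewrite (RInt_derive_R (fun x => sin (freq a b p * x) / freq a b p))
        by (apply continuity_cos_mul || (intros x; auto_derive; auto; field; auto)).
      rewrite freq_mul_b, sin_period by exact Hab. field; auto.
    + rewrite (RInt_derive_R (fun x => - cos (freq a b p * x) / freq a b p))
        by (apply continuity_sin_mul || (intros x; auto_derive; auto; field; auto)).
      rewrite freq_mul_b, cos_period by exact Hab. field; auto.
  - rewrite RInt_const. unfold scal; simpl; unfold mult; simpl. ring.
Qed.

Section GalerkinOrthogonality.

Variables (a b : R) (k : nat) (f : R -> R).
Hypotheses (Hab : a < b) (Hf : continuity f).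

Let A := fun g : R -> R => RInt g a b.
Let HA := RInt_linear a b.
Let HO := RInt_annihilates_harmonics a b k Hab.

Lemma RInt_Pk_sub : RInt (fun x => Pk a b k f x - f x) a b = 0.
Proof.
  rewrite RInt_minus_R by (auto; apply continuity_Pk).
  change (A (Pk a b k f) - A f = 0).
  rewrite Pk_trig_poly, (A_trig_poly a b k A (b - a)) by auto.
  unfold A. R_field. lra.
Qed.

Lemma RInt_cos_Pk_sub l : (1 <= l <= k)%nat ->
  RInt (fun x => cos (freq a b l * x) * (Pk a b k f x - f x)) a b = 0.
Proof.
  intros Hl.
  rewrite (RInt_ext_R _ (fun x => Pk a b k f x * cos (freq a b l * x)
                                  - f x * cos (freq a b l * x))) by (intros; ring).
  rewrite RInt_minus_R by (apply continuity_mult; auto using continuity_Pk, continuity_cos_mul).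
  change (A (fun x => Pk a b k f x * cos (freq a b l * x))
          - RInt (fun x => f x * cos (freq a b l * x)) a b = 0).
  rewrite Pk_trig_poly, (A_trig_poly_cos a b k A (b - a)) by auto.
  field. lra.
Qed.

Lemma RInt_sin_Pk_sub l : (1 <= l <= k)%nat ->
  RInt (fun x => sin (freq a b l * x) * (Pk a b k f x - f x)) a b = 0.
Proof.
  intros Hl.
  rewrite (RInt_ext_R _ (fun x => Pk a b k f x * sin (freq a b l * x)
                                  - f x * sin (freq a b l * x))) by (intros; ring).
  rewrite RInt_minus_R by (apply continuity_mult; auto using continuity_Pk, continuity_sin_mul).
  change (A (fun x => Pk a b k f x * sin (freq a b l * x))
          - RInt (fun x => f x * sin (freq a b l * x)) a b = 0).
  rewrite Pk_trig_poly, (A_trig_poly_sin a b k A (b - a)) by auto.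
  field. lra.
Qed.

Lemma RInt_galerkin_orthogonal p : in_Tk a b k p ->
  RInt (fun x => p x * (Pk a b k f x - f x)) a b = 0.
Proof.
  intros [c0 [ca [cb Hp]]].
  rewrite (RInt_ext_R _ (fun x => trig_poly a b k c0 ca cb x * (Pk a b k f x - f x)))
    by (intros; rewrite Hp; reflexivity).
  change (A (fun x => trig_poly a b k c0 ca cb x * (Pk a b k f x - f x)) = 0).
  rewrite (A_trig_poly_mul a b k A) by (auto; apply continuity_minus; auto using continuity_Pk).
  rewrite (sum1_ext _ (fun _ => 0)), sum1_const.
  - unfold A. rewrite RInt_Pk_sub. R_field.
  - intros j Hj. unfold A. rewrite RInt_cos_Pk_sub, RInt_sin_Pk_sub by exact Hj. R_field.
Qed.

End GalerkinOrthogonality.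

Lemma sum1_cos_arith (al th : R) (n : nat) :
  2 * sin (th / 2) * sum1 (fun m => cos (al + INR m * th)) n =
  sin (al + INR n * th + th / 2) - sin (al + th / 2).
Proof.
  rewrite <- sum1_scal.
  rewrite (sum1_ext _ (fun m => sin (al + INR m * th + th / 2)
                                - sin (al + INR (m - 1) * th + th / 2))).
  - rewrite (sum1_telescope (fun m => sin (al + INR m * th + th / 2))). simpl INR.
    rewrite Rmult_0_l, Rplus_0_r. reflexivity.
  - intros m Hm. rewrite minus_INR by lia. simpl INR.
    replace (al + (INR m - 1) * th + th / 2) with (al + INR m * th - th / 2) by field.
    rewrite sin_plus, sin_minus. ring.
Qed.

Lemma sum1_sin_arith (al th : R) (n : nat) :
  2 * sin (th / 2) * sum1 (fun m => sin (al + INR m * th)) n =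
  cos (al + th / 2) - cos (al + INR n * th + th / 2).
Proof.
  rewrite <- sum1_scal.
  rewrite (sum1_ext _ (fun m => - cos (al + INR m * th + th / 2)
                                - - cos (al + INR (m - 1) * th + th / 2))).
  - rewrite (sum1_telescope (fun m => - cos (al + INR m * th + th / 2))). simpl INR.
    rewrite Rmult_0_l, Rplus_0_r. ring.
  - intros m Hm. rewrite minus_INR by lia. simpl INR.
    replace (al + (INR m - 1) * th + th / 2) with (al + INR m * th - th / 2) by field.
    rewrite cos_plus, cos_minus. ring.
Qed.

Definition quad_node (a b : R) (k m : nat) : R := a + INR m * (b - a) / INR (2 * k + 1).

Definition quadrature (a b : R) (k : nat) (f : R -> R) : R :=
  sum1 (fun m => f (quad_node a b k m)) (2 * k + 1).

Lemma quadrature_linear a b k : linear_on_continuous (quadrature a b k).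
Proof. split; intros; unfold quadrature; [apply sum1_plus | apply sum1_scal]. Qed.

(* The node spacing [th] has [N th = 2 p PI], so the telescoped sums of [sum1_cos_arith]
   vanish; [sin (th/2) <> 0] because [p < N]. *)
Lemma quadrature_annihilates_harmonics a b k :
  a < b -> annihilates_harmonics a b k (quadrature a b k) (INR (2 * k + 1)).
Proof.
  intros Hab. split; [|unfold quadrature; rewrite sum1_const; ring].
  intros p Hp.
  set (N := INR (2 * k + 1)).
  assert (HN : 0 < N) by (apply lt_0_INR; lia).
  assert (HpN : INR p < N) by (apply lt_INR; lia).
  assert (Hp0 : 0 < INR p) by (apply lt_0_INR; lia).
  set (th := 2 * PI * INR p / N).
  assert (Hnode : forall m, freq a b p * quad_node a b k m = freq a b p * a + INR m * th).
  { intros m. unfold th, quad_node, freq. fold N. field. lra. }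
  assert (Hperiod : forall x, freq a b p * a + N * th + x = (freq a b p * a + x) + 2 * INR p * PI).
  { intros x. unfold th. field. lra. }
  assert (Hsin : sin (th / 2) <> 0).
  { apply Rgt_not_eq, sin_gt_0; unfold th; pose proof PI_RGT_0.
    - apply Rdiv_lt_0_compat; [apply Rdiv_lt_0_compat|]; nra.
    - apply (Rmult_lt_reg_r N); [lra|]. unfold Rdiv. field_simplify; nra. }
  unfold quadrature. split.
  - apply (Rmult_eq_reg_l (2 * sin (th / 2))); [|lra].
    rewrite (sum1_ext _ (fun m => cos (freq a b p * a + INR m * th)))
      by (intros; f_equal; apply Hnode).
    rewrite sum1_cos_arith. fold N. rewrite Hperiod, sin_period. ring.
  - apply (Rmult_eq_reg_l (2 * sin (th / 2))); [|lra].
    rewrite (sum1_ext _ (fun m => sin (freq a b p * a + INR m * th)))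
      by (intros; f_equal; apply Hnode).
    rewrite sum1_sin_arith. fold N. rewrite Hperiod, cos_period. ring.
Qed.

Definition interp_coef0 a b k (f : R -> R) : R := / INR (2 * k + 1) * quadrature a b k f.
Definition interp_coefc a b k (f : R -> R) (j : nat) : R :=
  2 / INR (2 * k + 1) * quadrature a b k (fun x => f x * cos (freq a b j * x)).
Definition interp_coefs a b k (f : R -> R) (j : nat) : R :=
  2 / INR (2 * k + 1) * quadrature a b k (fun x => f x * sin (freq a b j * x)).

Definition trig_interp a b k (f : R -> R) : R -> R :=
  trig_poly a b k (interp_coef0 a b k f) (interp_coefc a b k f) (interp_coefs a b k f).

Definition trig_interp_dx a b k (f : R -> R) : R -> R :=
  trig_poly a b k 0 (fun j => freq a b j * interp_coefs a b k f j)
                    (fun j => - freq a b j * interp_coefc a b k f j).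

Lemma trig_interp_id a b k f x : a < b -> in_Tk a b k f -> trig_interp a b k f x = f x.
Proof.
  intros Hab [c0 [ca [cb Hf]]].
  assert (HN : 0 < INR (2 * k + 1)) by (apply lt_0_INR; lia).
  pose proof (quadrature_linear a b k) as HA.
  pose proof (quadrature_annihilates_harmonics a b k Hab) as HO.
  rewrite Hf. replace f with (trig_poly a b k c0 ca cb) by (apply functional_extensionality; auto).
  apply trig_poly_ext; unfold interp_coef0, interp_coefc, interp_coefs.
  - rewrite (A_trig_poly a b k _ (INR (2 * k + 1))) by auto. field; lra.
  - intros j Hj.
    rewrite (A_trig_poly_cos a b k _ (INR (2 * k + 1))), (A_trig_poly_sin a b k _ (INR (2 * k + 1)))
      by auto.
    split; field; lra.
Qed.


Lemma in_Tk_trig_interp a b k f : in_Tk a b k (trig_interp a b k f).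
Proof. apply in_Tk_trig_poly. Qed.

Lemma in_Tk_trig_interp_dx a b k f : in_Tk a b k (trig_interp_dx a b k f).
Proof. apply in_Tk_trig_poly. Qed.

Lemma trig_interp_periodic a b k f : a < b -> trig_interp a b k f b = trig_interp a b k f a.
Proof. apply trig_poly_periodic. Qed.
Lemma is_derive_trig_poly a b k c0 ca cb x :
  is_derive (trig_poly a b k c0 ca cb) x
    (trig_poly a b k 0 (fun j => freq a b j * cb j) (fun j => - freq a b j * ca j) x).
Proof.
  apply is_derive_Rplus; [apply is_derive_Rconst|].
  apply (is_derive_sum1 (fun j x => ca j * cos (freq a b j * x) + cb j * sin (freq a b j * x))).
  intros j _. auto_derive; auto. ring.
Qed.

Lemma is_derive_trig_interp a b k f x :
  is_derive (trig_interp a b k f) x (trig_interp_dx a b k f x).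
Proof. apply is_derive_trig_poly. Qed.

Lemma is_derive_trig_poly_coef a b k (c0 : R -> R) (ca cb : R -> nat -> R) d0 da db t x :
  is_derive c0 t d0 ->
  (forall j, is_derive (fun u => ca u j) t (da j)) ->
  (forall j, is_derive (fun u => cb u j) t (db j)) ->
  is_derive (fun u => trig_poly a b k (c0 u) (ca u) (cb u) x) t (trig_poly a b k d0 da db x).
Proof.
  intros H0 Ha Hb. apply is_derive_Rplus; auto.
  apply (is_derive_sum1 (fun j u => ca u j * cos (freq a b j * x) + cb u j * sin (freq a b j * x))).
  intros j _. apply is_derive_Rplus; apply is_derive_Rmult_r; auto.
Qed.

Section TimeDependence.

Variables (a b : R) (k : nat).

Lemma is_derive_quadrature (X : R -> R -> R) (dX : R -> R) t :
  (forall y, is_derive (fun s => X s y) t (dX y)) ->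
  is_derive (fun s => quadrature a b k (X s)) t (quadrature a b k dX).
Proof.
  intros H. apply (is_derive_sum1 (fun m s => X s (quad_node a b k m))). intros; apply H.
Qed.

Lemma is_derive_interp_coef (X : R -> R -> R) t :
  (forall y, ex_derive (fun s => X s y) t) ->
  is_derive (fun s => interp_coef0 a b k (X s)) t (interp_coef0 a b k (dt X t)) /\
  (forall j, is_derive (fun s => interp_coefc a b k (X s) j) t (interp_coefc a b k (dt X t) j)) /\
  (forall j, is_derive (fun s => interp_coefs a b k (X s) j) t (interp_coefs a b k (dt X t) j)).
Proof.
  intros H. split; [|split; intros j]; apply is_derive_scal, is_derive_quadrature;
    intros y; [|apply is_derive_Rmult_r..]; apply Derive_correct, H.
Qed.

Lemma is_derive_trig_interp_time (X : R -> R -> R) t x :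
  (forall y, ex_derive (fun s => X s y) t) ->
  is_derive (fun s => trig_interp a b k (X s) x) t (trig_interp a b k (dt X t) x).
Proof.
  intros H. destruct (is_derive_interp_coef X t H) as [H0 [Hc Hs]].
  apply is_derive_trig_poly_coef; auto.
Qed.

Lemma is_derive_trig_interp_dx_time (X : R -> R -> R) t x :
  (forall y, ex_derive (fun s => X s y) t) ->
  is_derive (fun s => trig_interp_dx a b k (X s) x) t (trig_interp_dx a b k (dt X t) x).
Proof.
  intros H. destruct (is_derive_interp_coef X t H) as [_ [Hc Hs]].
  apply is_derive_trig_poly_coef; intros; auto using is_derive_Rconst, is_derive_scal.
Qed.

Lemma continuity_pt_quadrature (X : R -> R -> R) t :
  (forall y, continuity_pt (fun s => X s y) t) ->
  continuity_pt (fun s => quadrature a b k (X s)) t.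
Proof.
  intros H. unfold quadrature. induction (2 * k + 1)%nat as [|n IH]; simpl.
  - apply continuity_pt_const. intros ? ?; reflexivity.
  - apply continuity_pt_plus; auto.
Qed.

Lemma continuity_pt_interp_coef (X : R -> R -> R) t :
  (forall y, continuity_pt (fun s => X s y) t) ->
  continuity_pt (fun s => interp_coef0 a b k (X s)) t /\
  (forall j, continuity_pt (fun s => interp_coefc a b k (X s) j) t) /\
  (forall j, continuity_pt (fun s => interp_coefs a b k (X s) j) t).
Proof.
  intros H. split; [|split; intros j];
    apply (continuity_pt_scal (fun s => quadrature a b k _)), continuity_pt_quadrature;
    intros y; [|apply continuity_pt_mult; [|apply continuity_pt_const; intros ? ?; reflexivity]..];
    apply H.
Qed.

End TimeDependence.

Lemma continuity_2d_pt_fst (g : R -> R) t x : continuity_pt g t ->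
  continuity_2d_pt (fun u _ => g u) t x.
Proof.
  intros H. apply (continuity_1d_2d_pt_comp g (fun u _ => u)); auto using continuity_2d_pt_id1.
Qed.

Lemma continuity_2d_pt_snd (g : R -> R) t x : continuity_pt g x ->
  continuity_2d_pt (fun _ v => g v) t x.
Proof.
  intros H. apply (continuity_1d_2d_pt_comp g (fun _ v => v)); auto using continuity_2d_pt_id2.
Qed.

Lemma continuity_2d_pt_sqr (f : R -> R -> R) t x : continuity_2d_pt f t x ->
  continuity_2d_pt (fun u v => f u v ^ 2) t x.
Proof.
  intros H. apply (continuity_2d_pt_ext (fun u v => f u v * f u v)); [intros; ring|].
  apply continuity_2d_pt_mult; exact H.
Qed.

Lemma continuity_2d_pt_trig_poly a b k (c0 : R -> R) (ca cb : R -> nat -> R) t x :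
  continuity_pt c0 t ->
  (forall j, continuity_pt (fun u => ca u j) t) ->
  (forall j, continuity_pt (fun u => cb u j) t) ->
  continuity_2d_pt (fun u v => trig_poly a b k (c0 u) (ca u) (cb u) v) t x.
Proof.
  intros H0 Ha Hb. unfold trig_poly.
  apply (continuity_2d_pt_plus (fun u _ => c0 u)); [apply continuity_2d_pt_fst; auto|].
  induction k as [|n IH]; simpl.
  - apply continuity_2d_pt_const.
  - apply continuity_2d_pt_plus; [exact IH|].
    apply continuity_2d_pt_plus; apply continuity_2d_pt_mult;
      try (apply continuity_2d_pt_fst; auto).
    + apply (continuity_2d_pt_snd (fun v => cos _)), continuity_cos_mul.
    + apply (continuity_2d_pt_snd (fun v => sin _)), continuity_sin_mul.
Qed.

Lemma continuity_2d_pt_trig_interp a b k (X : R -> R -> R) t x :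
  (forall y, continuity_pt (fun s => X s y) t) ->
  continuity_2d_pt (fun s y => trig_interp a b k (X s) y) t x.
Proof.
  intros H. destruct (continuity_pt_interp_coef a b k X t H) as [H0 [Hc Hs]].
  apply continuity_2d_pt_trig_poly; auto.
Qed.

Lemma continuity_2d_pt_trig_interp_dx a b k (X : R -> R -> R) t x :
  (forall y, continuity_pt (fun s => X s y) t) ->
  continuity_2d_pt (fun s y => trig_interp_dx a b k (X s) y) t x.
Proof.
  intros H. destruct (continuity_pt_interp_coef a b k X t H) as [_ [Hc Hs]].
  apply continuity_2d_pt_trig_poly; intros.
  - apply continuity_pt_const; intros ? ?; reflexivity.
  - apply (continuity_pt_scal (fun u => interp_coefs a b k (X u) j)), Hs.
  - apply (continuity_pt_scal (fun u => interp_coefc a b k (X u) j)), Hc.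
Qed.

Lemma in_I_locally t0 t1 t : in_I t0 t1 t -> locally t (in_I t0 t1).
Proof.
  apply (locally_open (T := R_UniformSpace) (in_I t0 t1)); auto.
  apply open_and; [apply open_Rbar_gt | apply open_Rbar_lt].
Qed.

Lemma const_on_I_of_derive_0 (F : R -> R) t0 t1 :
  (forall t, in_I t0 t1 t -> is_derive F t 0) ->
  forall t s, in_I t0 t1 t -> in_I t0 t1 s -> F t = F s.
Proof.
  intros H t s [Ht0 Ht1] [Hs0 Hs1].
  assert (Hconv : forall x, Rmin t s <= x <= Rmax t s -> in_I t0 t1 x).
  { intros x Hx. unfold Rmin, Rmax in Hx. split.
    - destruct t0; simpl in *; auto. destruct (Rle_dec t s); lra.
    - destruct t1; simpl in *; auto. destruct (Rle_dec t s); lra. }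
  destruct (MVT_gen F t s (fun _ => 0)) as [c [_ Hc]].
  - intros x Hx. apply H, Hconv. lra.
  - intros x Hx. apply continuity_pt_filterlim, (ex_derive_continuous F).
    eexists. apply H, Hconv, Hx.
  - lra.
Qed.

Lemma is_derive_RInt_param_2d (f g : R -> R -> R) a b t (P : R -> Prop) :
  locally t P ->
  (forall u x, P u -> is_derive (fun s => f s x) u (g u x)) ->
  (forall x, continuity_2d_pt g t x) ->
  (forall u, continuity (f u)) ->
  is_derive (fun u => RInt (f u) a b) t (RInt (g t) a b).
Proof.
  intros HP Hd Hc Hf.
  assert (HPt : P t) by (apply locally_singleton; auto).
  replace (RInt (g t) a b) with (RInt (fun x => Derive (fun u => f u x) t) a b)
    by (apply RInt_ext_R; intros x; apply is_derive_unique, Hd, HPt).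
  apply (is_derive_RInt_param f a b t).
  - apply (filter_imp P); auto. intros u Hu x _. eexists. apply Hd, Hu.
  - intros x _. apply (continuity_2d_pt_ext_loc g); [|apply Hc].
    destruct HP as [eps Heps]. exists eps. intros u v Hu _.
    symmetry. apply is_derive_unique, Hd, Heps, Hu.
  - apply filter_forall. intros u. apply ex_RInt_continuity, Hf.
Qed.

Lemma conserved_of_zero_rate a b t0 t1 (Q : R -> R) (f g : R -> R -> R) :
  (forall u, in_I t0 t1 u -> Q u = RInt (f u) a b) ->
  (forall u x, in_I t0 t1 u -> is_derive (fun s => f s x) u (g u x)) ->
  (forall u x, in_I t0 t1 u -> continuity_2d_pt g u x) ->
  (forall u, continuity (f u)) ->
  (forall u, in_I t0 t1 u -> RInt (g u) a b = 0) ->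
  forall t s, in_I t0 t1 t -> in_I t0 t1 s -> Q t = Q s.
Proof.
  intros HQ Hd Hc Hf H0 t s Ht Hs. rewrite (HQ t), (HQ s) by assumption.
  apply (const_on_I_of_derive_0 (fun u => RInt (f u) a b) t0 t1); auto.
  intros u Hu. rewrite <- (H0 u Hu).
  apply (is_derive_RInt_param_2d f g a b u (in_I t0 t1)); auto using in_I_locally.
Qed.

Lemma RInt_flux_plus_defects a b k (g K Kd G1 G2 F1 F2 : R -> R) c1 c2 :
  a < b ->
  (forall x, g x = Kd x + (c1 * (G1 x * (Pk a b k F1 x - F1 x))
                           + c2 * (G2 x * (Pk a b k F2 x - F2 x)))) ->
  (forall x, is_derive K x (Kd x)) -> continuity Kd -> K b = K a ->
  in_Tk a b k G1 -> in_Tk a b k G2 -> continuity F1 -> continuity F2 ->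
  RInt g a b = 0.
Proof.
  intros Hab Hg HK HKd HKper HG1 HG2 HF1 HF2.
  pose proof (continuity_in_Tk a b k G1 HG1). pose proof (continuity_in_Tk a b k G2 HG2).
  pose proof (continuity_Pk a b k F1). pose proof (continuity_Pk a b k F2).
  rewrite (RInt_ext_R g _ a b Hg), !RInt_plus_R, !RInt_scal_R by continuity_tac.
  rewrite (RInt_derive_R K), !RInt_galerkin_orthogonal by auto.
  rewrite HKper. R_field.
Qed.

Lemma mass_rate_identity (V W N O Vx Wx Nx Ox Vt Wt Nt Ot P1 P2 beta tau : R) :
  Vt = - Ox - beta * P1 -> Wt = Nx + beta * P2 ->
  tau * Nt = Wx - O -> tau * Ot = - Vx + N ->
  2 * V * Vt + 2 * W * Wt + tau * (2 * N * Nt) + tau * (2 * O * Ot) =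
  (-2 * (Vx * O + V * Ox) + 2 * (Wx * N + W * Nx)) +
  ((-2 * beta) * (V * (P1 - (V ^ 2 + W ^ 2) * W))
   + (2 * beta) * (W * (P2 - (V ^ 2 + W ^ 2) * V))).
Proof.
  intros HV HW HN HO.
  replace (tau * (2 * N * Nt)) with (2 * N * (tau * Nt)) by ring.
  replace (tau * (2 * O * Ot)) with (2 * O * (tau * Ot)) by ring.
  rewrite HV, HW, HN, HO. ring.
Qed.

Lemma momentum_rate_identity
  (V W N O Vx Wx Nx Ox Vt Wt Nt Ot Vxt Wxt Nxt Oxt P1 P2 beta tau : R) :
  Vt = - Ox - beta * P1 -> Wt = Nx + beta * P2 ->
  tau * Nt = Wx - O -> tau * Ot = - Vx + N ->
  Vt * Wx + V * Wxt - (Vxt * W + Vx * Wt)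
    + tau * (Nt * Ox + N * Oxt) - tau * (Nxt * O + Nx * Ot) =
  (Vx * Wt + V * Wxt - (Vxt * W + Vt * Wx) + tau * (Nx * Ot + N * Oxt - (Nxt * O + Nt * Ox))
   - beta * (V ^ 2 + W ^ 2) * (2 * V * Vx + 2 * W * Wx) - 2 * O * Ox - 2 * N * Nx) +
  ((-2 * beta) * (Wx * (P1 - (V ^ 2 + W ^ 2) * W))
   + (-2 * beta) * (Vx * (P2 - (V ^ 2 + W ^ 2) * V))).
Proof.
  intros HV HW HN HO.
  replace Wx with (tau * Nt + O) by lra. replace Vx with (N - tau * Ot) by lra.
  rewrite HV, HW. ring.
Qed.

Lemma energy_rate_identity (V W N O Vx Wx Nx Ox Vt Wt Nt Ot Vxt Wxt P1 P2 beta tau : R) :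
  Vt = - Ox - beta * P1 -> Wt = Nx + beta * P2 ->
  tau * Nt = Wx - O -> tau * Ot = - Vx + N ->
  2 * (Nt * Vx + N * Vxt) - 2 * N * Nt + 2 * (Ot * Wx + O * Wxt) - 2 * O * Ot
    - beta / 2 * (2 * (V ^ 2 + W ^ 2) * (2 * V * Vt + 2 * W * Wt)) =
  (2 * (Nx * Vt + N * Vxt) + 2 * (Ox * Wt + O * Wxt)) +
  ((2 * beta) * (Vt * (P2 - (V ^ 2 + W ^ 2) * V))
   + (2 * beta) * (Wt * (P1 - (V ^ 2 + W ^ 2) * W))).
Proof.
  intros HV HW HN HO.
  replace Wx with (tau * Nt + O) by lra. replace Vx with (N - tau * Ot) by lra.
  replace Nx with (Wt - beta * P2) by lra. replace Ox with (- Vt - beta * P1) by lra.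
  field.
Qed.

Definition C1_Tk_curve a b k t0 t1 (X : R -> R -> R) : Prop :=
  forall t, in_I t0 t1 t ->
    in_Tk a b k (X t) /\ (forall x, ex_derive (fun s => X s x) t) /\
    (forall x, continuous (fun s => dt X s x) t).

Section Curve.

Context {a b : R} {k : nat} {t0 t1 : Rbar} {X : R -> R -> R}.
Hypotheses (Hab : a < b) (HX : C1_Tk_curve a b k t0 t1 X).

Lemma curve_trig_interp t : in_I t0 t1 t -> X t = trig_interp a b k (X t).
Proof.
  intros Ht. apply functional_extensionality. intros x.
  symmetry. apply trig_interp_id, HX; auto.
Qed.

Lemma curve_dx_trig_interp t : in_I t0 t1 t -> dx X t = trig_interp_dx a b k (X t).
Proof.
  intros Ht. apply functional_extensionality. intros x. unfold dx.
  apply is_derive_unique. eapply is_derive_ext; [|apply is_derive_trig_interp].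
  intros y. apply trig_interp_id, HX; auto.
Qed.

Lemma curve_is_derive_time t x : in_I t0 t1 t ->
  is_derive (fun s => trig_interp a b k (X s) x) t (trig_interp a b k (dt X t) x).
Proof. intros Ht. apply is_derive_trig_interp_time, HX, Ht. Qed.

Lemma curve_is_derive_dx_time t x : in_I t0 t1 t ->
  is_derive (fun s => trig_interp_dx a b k (X s) x) t (trig_interp_dx a b k (dt X t) x).
Proof. intros Ht. apply is_derive_trig_interp_dx_time, HX, Ht. Qed.

Lemma curve_dt_trig_interp t : in_I t0 t1 t -> dt X t = trig_interp a b k (dt X t).
Proof.
  intros Ht. apply functional_extensionality. intros x. unfold dt at 1.
  rewrite (Derive_ext_loc _ (fun s => trig_interp a b k (X s) x)).
  - apply is_derive_unique, curve_is_derive_time, Ht.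
  - apply (filter_imp (in_I t0 t1)); [|apply in_I_locally, Ht].
    intros u Hu. symmetry. apply trig_interp_id, HX; auto.
Qed.

Lemma curve_continuity_pt t x : in_I t0 t1 t -> continuity_pt (fun s => X s x) t.
Proof.
  intros Ht. apply continuity_pt_filterlim, (ex_derive_continuous (fun s => X s x)), HX, Ht.
Qed.

Lemma curve_dt_continuity_pt t x : in_I t0 t1 t -> continuity_pt (fun s => dt X s x) t.
Proof. intros Ht. apply continuity_pt_filterlim, HX, Ht. Qed.

End Curve.

Ltac differentiate :=
  repeat match goal with
  | |- is_derive (fun _ => trig_interp _ _ _ _ _) _ _ =>
      first [ eapply curve_is_derive_time; eassumption | apply is_derive_trig_interp ]
  | |- is_derive (trig_interp _ _ _ _) _ _ => apply is_derive_trig_interp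
  | |- is_derive (fun _ => trig_interp_dx _ _ _ _ _) _ _ =>
      eapply curve_is_derive_dx_time; eassumption
  | |- is_derive (fun _ => _ ^ 2) _ _ => eapply is_derive_Rsqr
  | |- is_derive (fun _ => _ + _) _ _ => eapply is_derive_Rplus
  | |- is_derive (fun _ => _ - _) _ _ => eapply is_derive_Rminus
  | |- is_derive (fun _ => _ * _) _ _ => eapply is_derive_Rmult
  | |- is_derive (fun _ => ?c) _ _ => apply is_derive_Rconst
  end.

Ltac continuity_2d :=
  repeat match goal with
  | |- continuity_2d_pt (fun _ _ => trig_interp _ _ _ _ _) _ _ =>
      apply continuity_2d_pt_trig_interp
  | |- continuity_2d_pt (fun _ _ => trig_interp_dx _ _ _ _ _) _ _ =>
      apply continuity_2d_pt_trig_interp_dx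
  | |- forall _, continuity_pt _ _ =>
      intros ?; first [ eapply curve_continuity_pt; eassumption
                      | eapply curve_dt_continuity_pt; eassumption ]
  | |- continuity_2d_pt (fun _ _ => _ ^ 2) _ _ => apply continuity_2d_pt_sqr
  | |- continuity_2d_pt (fun _ _ => _ + _) _ _ => apply continuity_2d_pt_plus
  | |- continuity_2d_pt (fun _ _ => _ - _) _ _ => apply continuity_2d_pt_minus
  | |- continuity_2d_pt (fun _ _ => _ * _) _ _ => apply continuity_2d_pt_mult
  | |- continuity_2d_pt (fun _ _ => ?c) _ _ => apply continuity_2d_pt_const
  end.

Section Conservation.

Variables (a b : R) (k : nat) (beta tau : R) (t0 t1 : Rbar) (v w nu om : R -> R -> R).
Hypothesis Hab : a < b.
Hypotheses (Hv : C1_Tk_curve a b k t0 t1 v) (Hw : C1_Tk_curve a b k t0 t1 w)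
           (Hnu : C1_Tk_curve a b k t0 t1 nu) (Hom : C1_Tk_curve a b k t0 t1 om).
Hypothesis Hsys : forall t x, in_I t0 t1 t ->
  dt v t x = - dx om t x - beta * Pk a b k (fun y => (v t y ^ 2 + w t y ^ 2) * w t y) x /\
  dt w t x = dx nu t x + beta * Pk a b k (fun y => (v t y ^ 2 + w t y ^ 2) * v t y) x /\
  tau * dt nu t x = dx w t x - om t x /\
  tau * dt om t x = - dx v t x + nu t x.

Local Notation val X u := (trig_interp a b k (X u)).
Local Notation dv X u := (trig_interp_dx a b k (X u)).

Ltac uninterpolate Hu :=
  repeat first
    [ rewrite <- (curve_trig_interp Hab Hv _ Hu)
    | rewrite <- (curve_trig_interp Hab Hw _ Hu)
    | rewrite <- (curve_trig_interp Hab Hnu _ Hu)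
    | rewrite <- (curve_trig_interp Hab Hom _ Hu)
    | rewrite <- (curve_dx_trig_interp Hab Hv _ Hu)
    | rewrite <- (curve_dx_trig_interp Hab Hw _ Hu)
    | rewrite <- (curve_dx_trig_interp Hab Hnu _ Hu)
    | rewrite <- (curve_dx_trig_interp Hab Hom _ Hu)
    | rewrite <- (curve_dt_trig_interp Hab Hv _ Hu)
    | rewrite <- (curve_dt_trig_interp Hab Hw _ Hu)
    | rewrite <- (curve_dt_trig_interp Hab Hnu _ Hu)
    | rewrite <- (curve_dt_trig_interp Hab Hom _ Hu) ].

Lemma interpolated_system u x : in_I t0 t1 u ->
  val (dt v) u x =
    - dv om u x - beta * Pk a b k (fun y => (val v u y ^ 2 + val w u y ^ 2) * val w u y) x /\
  val (dt w) u x =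
    dv nu u x + beta * Pk a b k (fun y => (val v u y ^ 2 + val w u y ^ 2) * val v u y) x /\
  tau * val (dt nu) u x = dv w u x - val om u x /\
  tau * val (dt om) u x = - dv v u x + val nu u x.
Proof. intros Hu. uninterpolate Hu. apply Hsys, Hu. Qed.

Let mass_rate u x :=
  2 * val v u x * val (dt v) u x + 2 * val w u x * val (dt w) u x
  + tau * (2 * val nu u x * val (dt nu) u x) + tau * (2 * val om u x * val (dt om) u x).

Lemma RInt_mass_rate u : in_I t0 t1 u -> RInt (mass_rate u) a b = 0.
Proof.
  intros Hu.
  apply (RInt_flux_plus_defects a b k _
    (fun x => -2 * (val v u x * val om u x) + 2 * (val w u x * val nu u x))
    (fun x => -2 * (dv v u x * val om u x + val v u x * dv om u x)
              + 2 * (dv w u x * val nu u x + val w u x * dv nu u x))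
    (val v u) (val w u)
    (fun y => (val v u y ^ 2 + val w u y ^ 2) * val w u y)
    (fun y => (val v u y ^ 2 + val w u y ^ 2) * val v u y)
    (-2 * beta) (2 * beta)); auto using in_Tk_trig_interp; try (continuity_tac; fail).
  - intros x. destruct (interpolated_system u x Hu) as (HV & HW & HN & HO).
    apply mass_rate_identity; assumption.
  - intros x. eapply is_derive_eq; [differentiate | R_field].
  - rewrite !trig_interp_periodic by exact Hab. reflexivity.
Qed.

Lemma mass_conserved t s : in_I t0 t1 t -> in_I t0 t1 s ->
  mass a b tau v w nu om t = mass a b tau v w nu om s.
Proof.
  apply (conserved_of_zero_rate a b t0 t1 _
    (fun u x => val v u x ^ 2 + val w u x ^ 2 + tau * val nu u x ^ 2 + tau * val om u x ^ 2)
    mass_rate); [| | | intros; continuity_tac | exact RInt_mass_rate].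
  - intros u Hu. unfold mass. uninterpolate Hu. reflexivity.
  - intros u x Hu. eapply is_derive_eq; [differentiate | unfold mass_rate; R_field].
  - intros u x Hu. unfold mass_rate. continuity_2d.
Qed.

Let momentum_rate u x :=
  val (dt v) u x * dv w u x + val v u x * dv (dt w) u x
  - (dv (dt v) u x * val w u x + dv v u x * val (dt w) u x)
  + tau * (val (dt nu) u x * dv om u x + val nu u x * dv (dt om) u x)
  - tau * (dv (dt nu) u x * val om u x + dv nu u x * val (dt om) u x).

Lemma RInt_momentum_rate u : in_I t0 t1 u -> RInt (momentum_rate u) a b = 0.
Proof.
  intros Hu.
  apply (RInt_flux_plus_defects a b k _
    (fun x => val v u x * val (dt w) u x - val (dt v) u x * val w u x
              + tau * (val nu u x * val (dt om) u x - val (dt nu) u x * val om u x)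
              - beta / 2 * (val v u x ^ 2 + val w u x ^ 2) ^ 2
              - val om u x ^ 2 - val nu u x ^ 2)
    (fun x => dv v u x * val (dt w) u x + val v u x * dv (dt w) u x
              - (dv (dt v) u x * val w u x + val (dt v) u x * dv w u x)
              + tau * (dv nu u x * val (dt om) u x + val nu u x * dv (dt om) u x
                       - (dv (dt nu) u x * val om u x + val (dt nu) u x * dv om u x))
              - beta * (val v u x ^ 2 + val w u x ^ 2)
                  * (2 * val v u x * dv v u x + 2 * val w u x * dv w u x)
              - 2 * val om u x * dv om u x - 2 * val nu u x * dv nu u x)
    (dv w u) (dv v u)
    (fun y => (val v u y ^ 2 + val w u y ^ 2) * val w u y)
    (fun y => (val v u y ^ 2 + val w u y ^ 2) * val v u y)
    (-2 * beta) (-2 * beta)); auto using in_Tk_trig_interp_dx; try (continuity_tac; fail).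
  - intros x. destruct (interpolated_system u x Hu) as (HV & HW & HN & HO).
    apply momentum_rate_identity; assumption.
  - intros x. eapply is_derive_eq; [differentiate | R_field].
  - rewrite !trig_interp_periodic by exact Hab. reflexivity.
Qed.

Lemma momentum_conserved t s : in_I t0 t1 t -> in_I t0 t1 s ->
  momentum a b tau v w nu om t = momentum a b tau v w nu om s.
Proof.
  apply (conserved_of_zero_rate a b t0 t1 _
    (fun u x => val v u x * dv w u x - dv v u x * val w u x
                + tau * val nu u x * dv om u x - tau * dv nu u x * val om u x)
    momentum_rate); [| | | intros; continuity_tac | exact RInt_momentum_rate].
  - intros u Hu. unfold momentum. uninterpolate Hu. reflexivity.
  - intros u x Hu. eapply is_derive_eq; [differentiate | unfold momentum_rate; R_field].
  - intros u x Hu. unfold momentum_rate. continuity_2d.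
Qed.

Let energy_rate u x :=
  2 * (val (dt nu) u x * dv v u x + val nu u x * dv (dt v) u x)
  - 2 * val nu u x * val (dt nu) u x
  + 2 * (val (dt om) u x * dv w u x + val om u x * dv (dt w) u x)
  - 2 * val om u x * val (dt om) u x
  - beta / 2 * (2 * (val v u x ^ 2 + val w u x ^ 2)
                * (2 * val v u x * val (dt v) u x + 2 * val w u x * val (dt w) u x)).

Lemma RInt_energy_rate u : in_I t0 t1 u -> RInt (energy_rate u) a b = 0.
Proof.
  intros Hu.
  apply (RInt_flux_plus_defects a b k _
    (fun x => 2 * val nu u x * val (dt v) u x + 2 * val om u x * val (dt w) u x)
    (fun x => 2 * (dv nu u x * val (dt v) u x + val nu u x * dv (dt v) u x)
              + 2 * (dv om u x * val (dt w) u x + val om u x * dv (dt w) u x))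
    (val (dt v) u) (val (dt w) u)
    (fun y => (val v u y ^ 2 + val w u y ^ 2) * val v u y)
    (fun y => (val v u y ^ 2 + val w u y ^ 2) * val w u y)
    (2 * beta) (2 * beta)); auto using in_Tk_trig_interp; try (continuity_tac; fail).
  - intros x. destruct (interpolated_system u x Hu) as (HV & HW & HN & HO).
    apply energy_rate_identity with (tau := tau); assumption.
  - intros x. eapply is_derive_eq; [differentiate | R_field].
  - rewrite !trig_interp_periodic by exact Hab. reflexivity.
Qed.

Lemma energy_conserved t s : in_I t0 t1 t -> in_I t0 t1 s ->
  energy a b beta v w nu om t = energy a b beta v w nu om s.
Proof.
  apply (conserved_of_zero_rate a b t0 t1 _
    (fun u x => 2 * val nu u x * dv v u x - val nu u x ^ 2
                + 2 * val om u x * dv w u x - val om u x ^ 2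
                - beta / 2 * (val v u x ^ 2 + val w u x ^ 2) ^ 2)
    energy_rate); [| | | intros; continuity_tac | exact RInt_energy_rate].
  - intros u Hu. unfold energy. uninterpolate Hu. reflexivity.
  - intros u x Hu. eapply is_derive_eq; [differentiate | unfold energy_rate; R_field].
  - intros u x Hu. unfold energy_rate. continuity_2d.
Qed.

End Conservation.

Ltac curve_of_components HT Hex Hct :=
  let u := fresh "u" in let Hu := fresh "Hu" in let x := fresh "x" in
  intros u Hu; split; [|split; intros x];
  [ destruct (HT u Hu) as (? & ? & ? & ?) | destruct (Hex u x Hu) as (? & ? & ? & ?)
  | destruct (Hct u x Hu) as (? & ? & ? & ?) ]; assumption.

Theorem theorem6p1 (a b : R) (k : nat) (beta tau : R) (t0 t1 : Rbar)
  (v w nu om : R -> R -> R) :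
  a < b -> 0 < tau -> Rbar_lt t0 t1 ->
  (* the solution takes values in T_k^4 *)
  (forall t, in_I t0 t1 t ->
     in_Tk a b k (v t) /\ in_Tk a b k (w t) /\
     in_Tk a b k (nu t) /\ in_Tk a b k (om t)) ->
  (* continuously differentiable in time *)
  (forall t x, in_I t0 t1 t ->
     ex_derive (fun s => v s x) t /\ ex_derive (fun s => w s x) t /\
     ex_derive (fun s => nu s x) t /\ ex_derive (fun s => om s x) t) ->
  (forall t x, in_I t0 t1 t ->
     continuous (fun s => dt v s x) t /\ continuous (fun s => dt w s x) t /\
     continuous (fun s => dt nu s x) t /\ continuous (fun s => dt om s x) t) ->
  (* the Fourier Galerkin semidiscretization *)
  (forall t x, in_I t0 t1 t ->
     dt v t x = - dx om t x
                - beta * Pk a b k (fun y => (v t y ^ 2 + w t y ^ 2) * w t y) x /\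
     dt w t x = dx nu t x
                + beta * Pk a b k (fun y => (v t y ^ 2 + w t y ^ 2) * v t y) x /\
     tau * dt nu t x = dx w t x - om t x /\
     tau * dt om t x = - dx v t x + nu t x) ->
  forall t s, in_I t0 t1 t -> in_I t0 t1 s ->
    mass a b tau v w nu om t = mass a b tau v w nu om s /\
    momentum a b tau v w nu om t = momentum a b tau v w nu om s /\
    energy a b beta v w nu om t = energy a b beta v w nu om s.
Proof.
  intros Hab _ _ HT Hex Hct Hsys t s Ht Hs.
  assert (Hv : C1_Tk_curve a b k t0 t1 v) by curve_of_components HT Hex Hct.
  assert (Hw : C1_Tk_curve a b k t0 t1 w) by curve_of_components HT Hex Hct.
  assert (Hnu : C1_Tk_curve a b k t0 t1 nu) by curve_of_components HT Hex Hct.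
  assert (Hom : C1_Tk_curve a b k t0 t1 om) by curve_of_components HT Hex Hct.
  split; [|split].
  - eapply mass_conserved; eassumption.
  - eapply momentum_conserved; eassumption.
  - eapply energy_conserved; eassumption.
Qed.
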